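(* Let $G=(V,E,\sigma)$ be a graph as in the context and $\Gamma$ a nonempty family of walks. Then $$\lim_{p\to\infty}\mathrm{Mod}_p(\Gamma)^{1/p}=\frac{1}{\ell(\Gamma)}=\mathrm{Mod}_\infty(\Gamma).$$ Moreover, for $1\le p<q<\infty$, $$\mathrm{Mod}_q(\Gamma)\le\mathrm{Mod}_p(\Gamma)\quad\text{and}\quad \sigma(E)^{-1/p}\mathrm{Mod}_p(\Gamma)^{1/p}\le\sigma(E)^{-1/q}\mathrm{Mod}_q(\Gamma)^{1/q},$$ where $\sigma(E)=\sum_{e\in E}\sigma(e)$. Consequently $\sigma(E)^{-1/p}\mathrm{Mod}_p(\Gamma)^{1/p}$ increases to $\mathrm{Mod}_\infty(\Gamma)$ as $p\to\infty$.
   Context: Let $G=(V,E,\sigma)$ be a finite simple graph (directed or undirected) with edge weights $\sigma:E\to(0,\infty)$. A walk $\gamma$ is a string of edges $e_1\dots e_r$, $r\ge1$, $e_i=(v_i,v_{i+1})\in E$; graph length $\ell(\gamma)=r$; $\rho$-length $\ell_\rho(\gamma)=\sum_i\rho(e_i)$; $\ell(\Gamma)=\inf_{\gamma\in\Gamma}\ell(\gamma)$. $A(\Gamma)=\{\rho:E\to\mathbb{R}:\rho\ge0,\ \ell_\rho(\gamma)\ge1\ \forall\gamma\in\Gamma\}$. For $1\le p<\infty$, $\mathcal{E}_p(\rho)=\sum_e\sigma(e)|\rho(e)|^p$; $\mathcal{E}_\infty(\rho)=\max_e|\rho(e)|$. $\mathrm{Mod}_p(\Gamma)=\inf_{\rho\in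 A(\Gamma)}\mathcal{E}_p(\rho)$ for $1\le p\le\infty$. *)

From Stdlib Require Import Reals Lra List Classical ClassicalEpsilon.
Import ListNotations.
Open Scope R_scope.

(** Infimum of a set of reals (classical); 0 if no infimum exists. *)
Definition is_inf (S : R -> Prop) (m : R) : Prop :=
  (forall x, S x -> m <= x) /\ (forall b, (forall x, S x -> b <= x) -> b <= m).

Definition Inf (S : R -> Prop) : R :=
  match excluded_middle_informative (exists m, is_inf S m) with
  | left h => proj1_sig (constructive_indefinite_description _ h)
  | right _ => 0
  end.

(** x^p for x >= 0 and real p > 0, with the convention 0^p = 0
    (Stdlib's Rpower 0 p = 1, so we guard it). *)
Definition rpow (x p : R) : R :=
  if Req_EM_T x 0 then 0 else Rpower x p.

Definition simple_graph (directed : bool) {V : Type} (E : list (V * V)) : Prop :=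
  NoDup E /\ (forall u v, In (u, v) E -> u <> v) /\
  (directed = false -> forall u v, In (u, v) E -> ~ In (v, u) E).

Definition traverses (directed : bool) {V : Type} (e : V * V) (v w : V) : Prop :=
  e = (v, w) \/ (directed = false /\ e = (w, v)).

Fixpoint walk_from (directed : bool) {V : Type} (E : list (V * V)) (v : V)
  (g : list (V * V)) : Prop :=
  match g with
  | [] => True
  | e :: t => exists w, In e E /\ traverses directed e v w /\ walk_from directed E w t
  end.

Definition is_walk (directed : bool) {V : Type} (E : list (V * V)) (g : list (V * V)) : Prop :=
  g <> [] /\ exists v, walk_from directed E v g.

Definition rho_length {V : Type} (rho : V * V -> R) (g : list (V * V)) : R :=
  fold_right (fun e acc => rho e + acc) 0 g.

Definition ell {V : Type} (Gamma : list (V * V) -> Prop) : R :=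
  Inf (fun x => exists g, Gamma g /\ x = INR (length g)).

Definition admissible {V : Type} (E : list (V * V)) (Gamma : list (V * V) -> Prop)
  (rho : V * V -> R) : Prop :=
  (forall e, In e E -> 0 <= rho e) /\ (forall g, Gamma g -> 1 <= rho_length rho g).

Definition energy_p {V : Type} (E : list (V * V)) (sigma : V * V -> R) (p : R)
  (rho : V * V -> R) : R :=
  fold_right (fun e acc => sigma e * rpow (Rabs (rho e)) p + acc) 0 E.

Definition energy_inf {V : Type} (E : list (V * V)) (rho : V * V -> R) : R :=
  fold_right (fun e acc => Rmax (Rabs (rho e)) acc) 0 E.

Definition Mod_p {V : Type} (E : list (V * V)) (sigma : V * V -> R) (p : R)
  (Gamma : list (V * V) -> Prop) : R :=
  Inf (fun m => exists rho, admissible E Gamma rho /\ m = energy_p E sigma p rho).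

Definition Mod_inf {V : Type} (E : list (V * V)) (Gamma : list (V * V) -> Prop) : R :=
  Inf (fun m => exists rho, admissible E Gamma rho /\ m = energy_inf E rho).

Definition sigma_total {V : Type} (E : list (V * V)) (sigma : V * V -> R) : R :=
  fold_right (fun e acc => sigma e + acc) 0 E.

Definition lim_infty (f : R -> R) (L : R) : Prop :=
  forall eps, 0 < eps -> exists P, forall p, P <= p -> Rabs (f p - L) < eps.

(* A shortest walk of Gamma has ell(Gamma) edges, so every admissible density is at least
   1/ell(Gamma) on one of its edges, while the constant density 1/ell(Gamma) is admissible.
   Hence (min sigma) ell^-p <= Mod_p <= sigma(E) ell^-p, which gives both limits and
   Mod_inf = 1/ell.  Truncating a density at 1 keeps it admissible and makes its p-energy
   decrease in p, so Mod_p is nonincreasing; the monotonicity of the normalized p-th root is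
   Jensen's inequality for t |-> t^(q/p) with weights sigma(e)/sigma(E), applied to rho^p. *)

From Stdlib Require Import Reals List Lra Classical ClassicalEpsilon.
From Coquelicot Require Import Coquelicot.
Import ListNotations.
Open Scope R_scope.

Lemma Rpower_pos x y : 0 < Rpower x y.
Proof. apply exp_pos. Qed.

Lemma Rpower_1_l y : Rpower 1 y = 1.
Proof. unfold Rpower; rewrite ln_1, Rmult_0_r; apply exp_0. Qed.

Lemma Rpower_antitone_exp x p q : 0 < x <= 1 -> p <= q -> Rpower x q <= Rpower x p.
Proof.
  intros Hx Hpq. unfold Rpower.
  assert (ln x <= 0) by (rewrite <- ln_1; apply ln_le; lra).
  destruct (Rle_lt_or_eq_dec (q * ln x) (p * ln x)) as [Hlt | ->]; [nra | | lra].
  left; now apply exp_increasing.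
Qed.

Lemma Rpower_normalize W M a :
  0 < W -> 0 < M -> Rpower W (- a) * Rpower M a = Rpower (M / W) a.
Proof.
  intros HW HM. unfold Rpower. rewrite <- exp_plus, ln_div by assumption.
  f_equal; ring.
Qed.

Lemma Rpower_root_mul_pow k a p :
  0 < k -> 0 < a -> 0 < p -> Rpower (k * Rpower a p) (1 / p) = Rpower k (1 / p) * a.
Proof.
  intros Hk Ha Hp. rewrite <- Rpower_mult_distr by (auto; apply Rpower_pos).
  rewrite Rpower_mult. replace (p * (1 / p)) with 1 by (field; lra).
  now rewrite Rpower_1.
Qed.

Lemma Rpower_bernoulli s r : 0 < s -> 1 <= r -> 1 + r * (s - 1) <= Rpower s r.
Proof.
  intros Hs Hr.
  set (f := fun x => Rpower x r - r * x).
  set (f' := fun x => r * Rpower x (r - 1) - r).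
  assert (Hf' : forall c, 0 < c -> derivable_pt_lim f c (f' c)).
  { intros c Hc. unfold f, f'. replace r with (r * 1) at 3 by ring.
    apply (derivable_pt_lim_minus (fun x => Rpower x r) (fun x => r * x)).
    - now apply derivable_pt_lim_power.
    - apply (derivable_pt_lim_scal id), derivable_pt_lim_id. }
  (* f is minimal at 1 since f' has the sign of x - 1 *)
  assert (Hf1 : f 1 = 1 - r) by (unfold f; rewrite Rpower_1_l; ring).
  assert (f 1 <= f s); [| unfold f in *; lra].
  destruct (Rtotal_order s 1) as [Hlt | [-> | Hgt]]; [| lra |].
  - destruct (MVT_cor2 f f' s 1 Hlt) as [c [Hmvt Hc]]; [intros c Hc; apply Hf'; lra |].
    assert (Hc1 : Rpower c (r - 1) <= Rpower 1 (r - 1)) by (apply Rle_Rpower_l; lra).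
    rewrite Rpower_1_l in Hc1.
    assert (f' c <= 0) by (unfold f'; nra). nra.
  - destruct (MVT_cor2 f f' 1 s Hgt) as [c [Hmvt Hc]]; [intros c Hc; apply Hf'; lra |].
    assert (Hc1 : Rpower 1 (r - 1) <= Rpower c (r - 1)) by (apply Rle_Rpower_l; lra).
    rewrite Rpower_1_l in Hc1.
    assert (0 <= f' c) by (unfold f'; nra). nra.
Qed.

Lemma rpow_Rpower x p : x <> 0 -> rpow x p = Rpower x p.
Proof. unfold rpow; destruct Req_EM_T; [contradiction | reflexivity]. Qed.

Lemma rpow_0_l p : rpow 0 p = 0.
Proof. unfold rpow; destruct Req_EM_T; [reflexivity | lra]. Qed.

Lemma rpow_nonneg x p : 0 <= rpow x p.
Proof. unfold rpow; destruct Req_EM_T; [lra | left; apply Rpower_pos]. Qed.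

Lemma rpow_le_base x y p : 0 <= x <= y -> 0 <= p -> rpow x p <= rpow y p.
Proof.
  intros [[Hx | <-] Hxy] Hp; [| rewrite rpow_0_l; apply rpow_nonneg].
  rewrite !rpow_Rpower by lra. apply Rle_Rpower_l; lra.
Qed.

Lemma rpow_antitone_exp x p q : 0 <= x <= 1 -> p <= q -> rpow x q <= rpow x p.
Proof.
  intros [[Hx | <-] Hx1] Hpq; [| rewrite !rpow_0_l; lra].
  rewrite !rpow_Rpower by lra. apply Rpower_antitone_exp; lra.
Qed.

Lemma rpow_rpow x p r : 0 <= x -> rpow (rpow x p) r = rpow x (p * r).
Proof.
  intros [Hx | <-]; [| now rewrite !rpow_0_l].
  rewrite (rpow_Rpower x p), !rpow_Rpower by (try apply Rgt_not_eq, Rpower_pos; lra).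
  apply Rpower_mult.
Qed.

(* [y ^ r] lies above its tangent line at [m]. *)
Lemma rpow_tangent m y r :
  0 < m -> 0 <= y -> 1 <= r -> Rpower m r * (1 - r) + r * (Rpower m r / m) * y <= rpow y r.
Proof.
  intros Hm [Hy | <-] Hr.
  - rewrite rpow_Rpower by lra.
    replace y with (m * (y / m)) at 2 by (field; lra).
    rewrite <- Rpower_mult_distr by (try apply Rdiv_lt_0_compat; lra).
    pose proof (Rpower_bernoulli (y / m) r ltac:(apply Rdiv_lt_0_compat; lra) Hr).
    pose proof (Rpower_pos m r).
    replace (Rpower m r * (1 - r) + r * (Rpower m r / m) * y)
      with (Rpower m r * (1 + r * (y / m - 1))) by (field; lra).
    apply Rmult_le_compat_l; lra.
  - rewrite rpow_0_l. pose proof (Rpower_pos m r). nra.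
Qed.

Definition lsum {A : Type} (l : list A) (f : A -> R) : R :=
  fold_right (fun x acc => f x + acc) 0 l.

Section ListSums.

Context {A : Type}.
Implicit Types (l : list A) (f g : A -> R).

Lemma lsum_le l f g : (forall x, In x l -> f x <= g x) -> lsum l f <= lsum l g.
Proof.
  induction l as [| a l IH]; simpl; intros H; [lra |].
  specialize (IH (fun x Hx => H x (or_intror Hx))). specialize (H a (or_introl eq_refl)). lra.
Qed.

Lemma lsum_ext l f g : (forall x, In x l -> f x = g x) -> lsum l f = lsum l g.
Proof.
  intros H. apply Rle_antisym; apply lsum_le; intros x Hx; rewrite (H x Hx); lra.
Qed.

Lemma lsum_nonneg l f : (forall x, In x l -> 0 <= f x) -> 0 <= lsum l f.
Proof.
  induction l as [| a l IH]; simpl; intros H; [lra |].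
  specialize (IH (fun x Hx => H x (or_intror Hx))). specialize (H a (or_introl eq_refl)). lra.
Qed.

Lemma le_lsum_term l f x : (forall y, In y l -> 0 <= f y) -> In x l -> f x <= lsum l f.
Proof.
  induction l as [| a l IH]; simpl; intros H Hx; [contradiction |].
  assert (Hl : forall y, In y l -> 0 <= f y) by auto.
  destruct Hx as [<- | Hx].
  - pose proof (lsum_nonneg l f Hl). lra.
  - specialize (IH Hl Hx). specialize (H a (or_introl eq_refl)). lra.
Qed.

Lemma lsum_lin l f g a b : lsum l (fun x => a * f x + b * g x) = a * lsum l f + b * lsum l g.
Proof. induction l as [| x l IH]; simpl; [ring |]. rewrite IH; ring. Qed.

Lemma lsum_mulr l f k : lsum l (fun x => f x * k) = lsum l f * k.
Proof. induction l as [| x l IH]; simpl; [ring |]. rewrite IH; ring. Qed.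

(* Jensen's inequality for [y ^ r]: sum the tangent inequality at the weighted mean. *)
Lemma lsum_weighted_power_mean l (w y : A -> R) r :
  (forall x, In x l -> 0 < w x) -> (forall x, In x l -> 0 <= y x) -> 1 <= r ->
  0 < lsum l (fun x => w x * y x) ->
  lsum l w * Rpower (lsum l (fun x => w x * y x) / lsum l w) r
    <= lsum l (fun x => w x * rpow (y x) r).
Proof.
  intros Hw Hy Hr HA.
  set (W := lsum l w) in *. set (M := lsum l (fun x => w x * y x)) in *.
  assert (HW : 0 < W).
  { destruct l as [| a l]; [unfold M in HA; simpl in HA; lra |].
    pose proof (le_lsum_term (a :: l) w a (fun x Hx => Rlt_le _ _ (Hw x Hx)) (or_introl eq_refl)).
    pose proof (Hw a (or_introl eq_refl)). unfold W; lra. }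
  set (m := M / W). assert (Hm : 0 < m) by (apply Rdiv_lt_0_compat; lra).
  set (K := Rpower m r).
  assert (Htan : lsum l (fun x => (K * (1 - r)) * w x + (r * (K / m)) * (w x * y x))
                 <= lsum l (fun x => w x * rpow (y x) r)).
  { apply lsum_le. intros x Hx.
    replace (K * (1 - r) * w x + r * (K / m) * (w x * y x))
      with (w x * (K * (1 - r) + r * (K / m) * y x)) by ring.
    apply Rmult_le_compat_l; [left; auto | apply rpow_tangent; auto]. }
  rewrite lsum_lin in Htan. fold W M in Htan.
  replace (K * (1 - r) * W + r * (K / m) * M) with (W * K) in Htan by (unfold m; field; lra).
  exact Htan.
Qed.

End ListSums.

(* Equal to 1 on the empty list, so that it is positive whenever [f] is. *)
Definition lmin {A : Type} (l : list A) (f : A -> R) : R :=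
  fold_right (fun x acc => Rmin (f x) acc) 1 l.

Lemma lmin_pos {A : Type} (l : list A) f : (forall x, In x l -> 0 < f x) -> 0 < lmin l f.
Proof. induction l as [| a l IH]; simpl; intros H; [lra |]. apply Rmin_glb_lt; auto. Qed.

Lemma lmin_le {A : Type} (l : list A) f x : In x l -> lmin l f <= f x.
Proof.
  induction l as [| a l IH]; simpl; intros Hx; [contradiction |].
  destruct Hx as [<- | Hx]; [apply Rmin_l | eapply Rle_trans; [apply Rmin_r | auto]].
Qed.

Lemma Inf_eq S m : is_inf S m -> Inf S = m.
Proof.
  intros Hm. unfold Inf. destruct excluded_middle_informative as [Hex | Hex]; [| exfalso; eauto].
  destruct (constructive_indefinite_description _ Hex) as [m' [Hm'1 Hm'2]]; simpl.
  destruct Hm as [Hm1 Hm2]. apply Rle_antisym; auto.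
Qed.

Lemma is_inf_Inf S b : (exists x, S x) -> (forall x, S x -> b <= x) -> is_inf S (Inf S).
Proof.
  intros [x0 Hx0] Hb.
  destruct (completeness (fun y => S (- y))) as [l [Hub Hlub]].
  - exists (- b). intros y Hy. specialize (Hb _ Hy). lra.
  - exists (- x0). now rewrite Ropp_involutive.
  - assert (Hinf : is_inf S (- l)).
    { split.
      - intros x Hx. assert (- x <= l) by (apply Hub; now rewrite Ropp_involutive). lra.
      - intros b' Hb'. assert (l <= - b'); [| lra].
        apply Hlub. intros y Hy. specialize (Hb' _ Hy). lra. }
    now rewrite (Inf_eq S (- l) Hinf).
Qed.

Lemma lim_infty_is_lim (f : R -> R) (L : R) : is_lim f p_infty L -> lim_infty f L.
Proof.
  intros Hf eps Heps. apply is_lim_spec in Hf.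
  destruct (Hf (mkposreal eps Heps)) as [M HM].
  exists (M + 1). intros p Hp. apply HM. lra.
Qed.

Lemma is_lim_Rpower_inv_mulr c a : 0 < c -> is_lim (fun p => Rpower c (1 / p) * a) p_infty a.
Proof.
  intros Hc. replace (Finite a) with (Rbar_mult (exp 0) a) by (simpl; now rewrite exp_0, Rmult_1_l).
  apply is_lim_scal_r.
  apply (is_lim_comp_continuous (fun p => 1 / p * ln c) exp p_infty 0); [| apply continuous_exp].
  rewrite <- (Rmult_0_l (ln c)). apply (is_lim_scal_r (fun p => 1 / p) (ln c) p_infty 0).
  apply (is_lim_ext Rinv); [intros p; unfold Rdiv; ring |].
  apply (is_lim_inv (fun p => p) p_infty p_infty); [apply is_lim_id | discriminate].
Qed.

Lemma walk_from_edges (directed : bool) {V : Type} (E : list (V * V)) g v e :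
  walk_from directed E v g -> In e g -> In e E.
Proof.
  revert v. induction g as [| a g IH]; simpl; intros v Hg He; [contradiction |].
  destruct Hg as [w [Ha [_ Hw]]]. destruct He as [<- | He]; eauto.
Qed.

Lemma is_walk_edges (directed : bool) {V : Type} (E : list (V * V)) g e :
  is_walk directed E g -> In e g -> In e E.
Proof. intros [_ [v Hv]]. eapply walk_from_edges; eauto. Qed.

Lemma rho_length_const {V : Type} (c : R) (g : list (V * V)) :
  rho_length (fun _ => c) g = INR (length g) * c.
Proof.
  induction g as [| a g IH]; [simpl; ring |].
  cbn [length]. rewrite S_INR. simpl in *. rewrite IH; ring.
Qed.

(* Pigeonhole: some edge carries at least the average density. *)
Lemma rho_length_le_max_edge {V : Type} (rho : V * V -> R) g :
  g <> [] -> exists e, In e g /\ rho_length rho g <= INR (length g) * rho e.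
Proof.
  induction g as [| a g IH]; intros Hne; [congruence |].
  destruct g as [| b g]; [exists a; simpl; split; [auto | lra] |].
  destruct (IH ltac:(discriminate)) as [e [He Hle]].
  change (rho_length rho (a :: b :: g)) with (rho a + rho_length rho (b :: g)).
  change (length (a :: b :: g)) with (S (length (b :: g))). rewrite S_INR.
  pose proof (pos_INR (length (b :: g))).
  destruct (Rle_dec (rho a) (rho e)).
  - exists e; split; [right; auto | nra].
  - exists a; split; [left; auto | nra].
Qed.

Lemma rho_length_truncate {V : Type} (rho : V * V -> R) g :
  (forall e, In e g -> 0 <= rho e) ->
  Rmin (rho_length rho g) 1 <= rho_length (fun e => Rmin (rho e) 1) g.
Proof.
  induction g as [| a g IH]; simpl; intros Hrho; [apply Rmin_l |].
  specialize (IH (fun e He => Hrho e (or_intror He))).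
  pose proof (Hrho a (or_introl eq_refl)).
  assert (0 <= rho_length (fun e => Rmin (rho e) 1) g).
  { apply (lsum_nonneg g (fun e => Rmin (rho e) 1)). intros e He.
    apply Rmin_glb; [apply Hrho; auto | lra]. }
  unfold Rmin in *. repeat destruct Rle_dec; lra.
Qed.

Lemma energy_inf_ge {V : Type} (E : list (V * V)) rho e :
  In e E -> Rabs (rho e) <= energy_inf E rho.
Proof.
  induction E as [| a E IH]; simpl; intros He; [contradiction |].
  destruct He as [<- | He]; [apply Rmax_l | eapply Rle_trans; [apply IH; auto | apply Rmax_r]].
Qed.

Lemma energy_inf_const_le {V : Type} (E : list (V * V)) c :
  0 <= c -> energy_inf E (fun _ => c) <= c.
Proof.
  induction E as [| a E IH]; simpl; intros Hc; [lra |].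
  apply Rmax_lub; [rewrite Rabs_right; lra | auto].
Qed.

Section Moduli.

Variables (directed : bool) (V : Type) (E : list (V * V)) (sigma : V * V -> R)
  (Gamma : list (V * V) -> Prop).
Hypothesis sigma_pos : forall e, In e E -> 0 < sigma e.
Hypothesis Gamma_walks : forall g, Gamma g -> is_walk directed E g.
Hypothesis Gamma_nonempty : exists g, Gamma g.

Lemma ell_attained : exists g0, Gamma g0 /\ ell Gamma = INR (length g0).
Proof.
  destruct Gamma_nonempty as [g Hg].
  destruct (Wf_nat.dec_inh_nat_subset_has_unique_least_element
              (fun n => exists g, Gamma g /\ length g = n)) as [n [[[g0 [Hg0 <-]] Hmin] _]];
    [intros n; apply classic | eauto |].
  exists g0. split; [exact Hg0 |]. apply Inf_eq. split.
  - intros x [g1 [Hg1 ->]]. apply le_INR, Hmin. eauto.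
  - intros b Hb. apply Hb. eauto.
Qed.

Lemma ell_le_length g : Gamma g -> ell Gamma <= INR (length g).
Proof.
  intros Hg. apply (is_inf_Inf _ 0); [eauto | | eauto].
  intros x [g1 [_ ->]]. apply pos_INR.
Qed.

Lemma ell_ge_1 : 1 <= ell Gamma.
Proof.
  destruct ell_attained as [g0 [Hg0 ->]].
  destruct (Gamma_walks g0 Hg0) as [Hne _].
  destruct g0 as [| e g0]; [congruence |]. cbn [length]. rewrite S_INR.
  pose proof (pos_INR (length g0)). lra.
Qed.

Lemma admissible_inv_ell : admissible E Gamma (fun _ => 1 / ell Gamma).
Proof.
  pose proof ell_ge_1. split.
  - intros e _. apply Rlt_le, Rdiv_lt_0_compat; lra.
  - intros g Hg. rewrite rho_length_const.
    pose proof (ell_le_length g Hg).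
    replace 1 with (ell Gamma * (1 / ell Gamma)) at 1 by (field; lra).
    apply Rmult_le_compat_r; [apply Rlt_le, Rdiv_lt_0_compat |]; lra.
Qed.

(* A shortest walk has [ell Gamma] edges and [rho]-length at least 1. *)
Lemma admissible_heavy_edge rho :
  admissible E Gamma rho -> exists e, In e E /\ 1 / ell Gamma <= rho e.
Proof.
  intros [_ Hlen]. destruct ell_attained as [g0 [Hg0 Hell]].
  destruct (rho_length_le_max_edge rho g0) as [e [He Hle]]; [apply (Gamma_walks g0 Hg0) |].
  exists e. split; [eapply is_walk_edges; eauto |].
  pose proof ell_ge_1. specialize (Hlen g0 Hg0). rewrite <- Hell in Hle.
  apply (Rmult_le_reg_l (ell Gamma)); [lra |].
  replace (ell Gamma * (1 / ell Gamma)) with 1 by (field; lra). lra.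
Qed.

Lemma admissible_truncate rho :
  admissible E Gamma rho -> admissible E Gamma (fun e => Rmin (rho e) 1).
Proof.
  intros [Hnonneg Hlen]. split.
  - intros e He. apply Rmin_glb; [auto | lra].
  - intros g Hg. eapply Rle_trans; [| apply rho_length_truncate].
    + apply Rmin_glb; [auto | lra].
    + intros e He. apply Hnonneg. eapply is_walk_edges; eauto.
Qed.

Lemma sigma_total_pos : 0 < sigma_total E sigma.
Proof.
  destruct (admissible_heavy_edge _ admissible_inv_ell) as [e [He _]].
  eapply Rlt_le_trans; [apply (sigma_pos e He) |].
  apply (le_lsum_term E sigma e); [intros; apply Rlt_le |]; auto.
Qed.

Lemma Mod_p_is_inf p :
  is_inf (fun m => exists rho, admissible E Gamma rho /\ m = energy_p E sigma p rho)
    (Mod_p E sigma p Gamma).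
Proof.
  apply (is_inf_Inf _ 0).
  { eexists; exists (fun _ => 1 / ell Gamma). split; [apply admissible_inv_ell | reflexivity]. }
  intros x [rho [_ ->]]. apply lsum_nonneg. intros e He.
  apply Rmult_le_pos; [apply Rlt_le; auto | apply rpow_nonneg].
Qed.

Lemma Mod_p_le_energy p rho :
  admissible E Gamma rho -> Mod_p E sigma p Gamma <= energy_p E sigma p rho.
Proof. intros Hrho. apply (proj1 (Mod_p_is_inf p)). eauto. Qed.

Lemma Mod_p_ge p b :
  (forall rho, admissible E Gamma rho -> b <= energy_p E sigma p rho) -> b <= Mod_p E sigma p Gamma.
Proof. intros Hb. apply (proj2 (Mod_p_is_inf p)). intros x [rho [Hrho ->]]. auto. Qed.

Lemma Mod_p_lower p : 0 <= p -> lmin E sigma * Rpower (1 / ell Gamma) p <= Mod_p E sigma p Gamma.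
Proof.
  intros Hp. pose proof ell_ge_1. apply Mod_p_ge. intros rho Hrho.
  destruct (admissible_heavy_edge rho Hrho) as [e [He Hheavy]].
  eapply Rle_trans;
    [| apply (le_lsum_term E (fun e => sigma e * rpow (Rabs (rho e)) p)); [| exact He]].
  - apply Rmult_le_compat;
      [apply Rlt_le, lmin_pos; auto | apply Rlt_le, Rpower_pos | apply lmin_le; auto |].
    rewrite <- rpow_Rpower by (apply Rgt_not_eq, Rdiv_lt_0_compat; lra).
    apply rpow_le_base; [| exact Hp]. split; [apply Rlt_le, Rdiv_lt_0_compat; lra |].
    eapply Rle_trans; [exact Hheavy | apply Rle_abs].
  - intros e' He'. apply Rmult_le_pos; [apply Rlt_le; auto | apply rpow_nonneg].
Qed.

Lemma Mod_p_upper p : Mod_p E sigma p Gamma <= sigma_total E sigma * Rpower (1 / ell Gamma) p.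
Proof.
  pose proof ell_ge_1. assert (0 < 1 / ell Gamma) by (apply Rdiv_lt_0_compat; lra).
  eapply Rle_trans; [apply (Mod_p_le_energy p _ admissible_inv_ell) |].
  change (lsum E (fun e => sigma e * rpow (Rabs (1 / ell Gamma)) p)
          <= lsum E sigma * Rpower (1 / ell Gamma) p).
  rewrite Rabs_right, rpow_Rpower, lsum_mulr by lra. lra.
Qed.

Lemma Mod_p_pos p : 0 <= p -> 0 < Mod_p E sigma p Gamma.
Proof.
  intros Hp. eapply Rlt_le_trans; [| apply Mod_p_lower, Hp].
  apply Rmult_lt_0_compat; [apply lmin_pos; auto | apply Rpower_pos].
Qed.

Lemma Mod_p_root_bounds p : 0 < p ->
  Rpower (lmin E sigma) (1 / p) * (1 / ell Gamma) <= rpow (Mod_p E sigma p Gamma) (1 / p)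
  <= Rpower (sigma_total E sigma) (1 / p) * (1 / ell Gamma).
Proof.
  intros Hp. pose proof ell_ge_1. pose proof sigma_total_pos.
  assert (0 < lmin E sigma) by (apply lmin_pos; auto).
  assert (0 < 1 / ell Gamma) by (apply Rdiv_lt_0_compat; lra).
  assert (0 < 1 / p) by (apply Rdiv_lt_0_compat; lra).
  pose proof (Mod_p_pos p ltac:(lra)).
  rewrite rpow_Rpower by lra.
  rewrite <- !Rpower_root_mul_pow by lra.
  split; apply Rle_Rpower_l; try lra; split.
  - apply Rmult_lt_0_compat; [lra | apply Rpower_pos].
  - apply Mod_p_lower; lra.
  - lra.
  - apply Mod_p_upper.
Qed.

Lemma is_lim_Mod_p_root :
  is_lim (fun p => rpow (Mod_p E sigma p Gamma) (1 / p)) p_infty (1 / ell Gamma).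
Proof.
  apply (is_lim_le_le_loc (fun p => Rpower (lmin E sigma) (1 / p) * (1 / ell Gamma))
           (fun p => Rpower (sigma_total E sigma) (1 / p) * (1 / ell Gamma))).
  - exists 0. apply Mod_p_root_bounds.
  - apply is_lim_Rpower_inv_mulr, lmin_pos; auto.
  - apply is_lim_Rpower_inv_mulr, sigma_total_pos.
Qed.

Lemma Mod_inf_inv_ell : Mod_inf E Gamma = 1 / ell Gamma.
Proof.
  pose proof ell_ge_1. apply Inf_eq. split.
  - intros x [rho [Hrho ->]]. destruct (admissible_heavy_edge rho Hrho) as [e [He Hheavy]].
    eapply Rle_trans; [| apply energy_inf_ge; exact He].
    eapply Rle_trans; [exact Hheavy | apply Rle_abs].
  - intros b Hb. eapply Rle_trans.
    { apply Hb. exists (fun _ => 1 / ell Gamma). split; [apply admissible_inv_ell | reflexivity]. }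
    apply energy_inf_const_le, Rlt_le, Rdiv_lt_0_compat; lra.
Qed.

(* Truncating an admissible density at 1 keeps it admissible, and on [0, 1] powers decrease. *)
Lemma Mod_p_antitone p q : 0 <= p <= q -> Mod_p E sigma q Gamma <= Mod_p E sigma p Gamma.
Proof.
  intros Hpq. apply Mod_p_ge. intros rho Hrho.
  eapply Rle_trans; [apply (Mod_p_le_energy q _ (admissible_truncate rho Hrho)) |].
  apply lsum_le. intros e He. apply Rmult_le_compat_l; [apply Rlt_le; auto |].
  pose proof (proj1 Hrho e He).
  assert (0 <= Rmin (rho e) 1) by (apply Rmin_glb; lra).
  rewrite !Rabs_right by lra.
  eapply Rle_trans; [apply rpow_antitone_exp; [split; [lra | apply Rmin_r] | apply Hpq] |].
  apply rpow_le_base; [split; [lra | apply Rmin_l] | apply Hpq].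
Qed.

(* Jensen's inequality for [t ^ (q / p)] with weights [sigma], applied to [rho ^ p]. *)
Lemma Mod_p_power_mean p q : 0 < p <= q ->
  sigma_total E sigma * Rpower (Mod_p E sigma p Gamma / sigma_total E sigma) (q / p)
    <= Mod_p E sigma q Gamma.
Proof.
  intros Hpq. pose proof sigma_total_pos as HW. pose proof (Mod_p_pos p ltac:(lra)) as HMp.
  assert (Hr : 1 <= q / p) by (apply (Rmult_le_reg_l p); [lra |]; field_simplify; lra).
  apply Mod_p_ge. intros rho Hrho.
  set (y := fun e => rpow (Rabs (rho e)) p).
  assert (HA : Mod_p E sigma p Gamma <= lsum E (fun e => sigma e * y e))
    by exact (Mod_p_le_energy p rho Hrho).
  assert (Hq : energy_p E sigma q rho = lsum E (fun e => sigma e * rpow (y e) (q / p))).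
  { apply lsum_ext. intros e _. unfold y. rewrite rpow_rpow by apply Rabs_pos.
    do 2 f_equal. field. lra. }
  rewrite Hq. eapply Rle_trans;
    [| apply (lsum_weighted_power_mean E sigma y); auto; [intros; apply rpow_nonneg | lra]].
  apply Rmult_le_compat_l; [apply Rlt_le, HW |]. apply Rle_Rpower_l; [lra |]. split.
  - apply Rdiv_lt_0_compat; [lra | exact HW].
  - apply Rmult_le_compat_r; [apply Rlt_le, Rinv_0_lt_compat, HW | exact HA].
Qed.

Lemma normalized_Mod_p_mono p q : 0 < p <= q ->
  Rpower (sigma_total E sigma) (- (1 / p)) * rpow (Mod_p E sigma p Gamma) (1 / p)
    <= Rpower (sigma_total E sigma) (- (1 / q)) * rpow (Mod_p E sigma q Gamma) (1 / q).
Proof.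
  intros Hpq. pose proof sigma_total_pos as HW.
  pose proof (Mod_p_pos p ltac:(lra)). pose proof (Mod_p_pos q ltac:(lra)).
  pose proof (Mod_p_power_mean p q Hpq) as Hmean.
  rewrite !rpow_Rpower, !Rpower_normalize by lra.
  replace (1 / p) with (q / p * (1 / q)) by (field; lra).
  rewrite <- Rpower_mult. apply Rle_Rpower_l; [apply Rlt_le, Rdiv_lt_0_compat; lra |].
  split; [apply Rpower_pos |].
  apply (Rmult_le_reg_l (sigma_total E sigma)); [lra |].
  replace (sigma_total E sigma * (Mod_p E sigma q Gamma / sigma_total E sigma))
    with (Mod_p E sigma q Gamma) by (field; lra).
  exact Hmean.
Qed.

Lemma normalized_Mod_p_bounds p : 0 < p ->
  Rpower (lmin E sigma / sigma_total E sigma) (1 / p) * (1 / ell Gamma)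
    <= Rpower (sigma_total E sigma) (- (1 / p)) * rpow (Mod_p E sigma p Gamma) (1 / p)
    <= 1 / ell Gamma.
Proof.
  intros Hp. pose proof sigma_total_pos as HW.
  assert (0 < lmin E sigma) by (apply lmin_pos; auto).
  destruct (Mod_p_root_bounds p Hp) as [Hlo Hhi].
  pose proof (Rpower_pos (sigma_total E sigma) (- (1 / p))) as HWp.
  apply (Rmult_le_compat_l _ _ _ (Rlt_le _ _ HWp)) in Hlo, Hhi.
  rewrite <- Rmult_assoc, Rpower_normalize in Hlo, Hhi by lra.
  rewrite Rdiv_diag, Rpower_1_l, Rmult_1_l in Hhi by lra.
  split; assumption.
Qed.

Lemma is_lim_normalized_Mod_p :
  is_lim (fun p => Rpower (sigma_total E sigma) (- (1 / p)) * rpow (Mod_p E sigma p Gamma) (1 / p))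
    p_infty (1 / ell Gamma).
Proof.
  apply (is_lim_le_le_loc
           (fun p => Rpower (lmin E sigma / sigma_total E sigma) (1 / p) * (1 / ell Gamma))
           (fun _ => 1 / ell Gamma)).
  - exists 0. apply normalized_Mod_p_bounds.
  - apply is_lim_Rpower_inv_mulr, Rdiv_lt_0_compat; [apply lmin_pos; auto | apply sigma_total_pos].
  - apply is_lim_const.
Qed.

End Moduli.

Theorem mainTheorem8 (directed : bool) (V : Type) (E : list (V * V))
  (sigma : V * V -> R) (Gamma : list (V * V) -> Prop)
  (HG : simple_graph directed E)
  (Hsigma : forall e, In e E -> 0 < sigma e)
  (Hwalks : forall g, Gamma g -> is_walk directed E g)
  (Hne : exists g, Gamma g) :
  lim_infty (fun p => rpow (Mod_p E sigma p Gamma) (1 / p)) (1 / ell Gamma) /\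
  1 / ell Gamma = Mod_inf E Gamma /\
  (forall p q, 1 <= p -> p < q ->
     Mod_p E sigma q Gamma <= Mod_p E sigma p Gamma /\
     Rpower (sigma_total E sigma) (- (1 / p)) * rpow (Mod_p E sigma p Gamma) (1 / p)
     <= Rpower (sigma_total E sigma) (- (1 / q)) * rpow (Mod_p E sigma q Gamma) (1 / q)) /\
  lim_infty (fun p => Rpower (sigma_total E sigma) (- (1 / p)) * rpow (Mod_p E sigma p Gamma) (1 / p))
    (Mod_inf E Gamma).
Proof.
  rewrite (Mod_inf_inv_ell directed); auto.
  split; [apply lim_infty_is_lim; eapply is_lim_Mod_p_root; eauto |].
  split; [reflexivity |].
  split; [| apply lim_infty_is_lim; eapply is_lim_normalized_Mod_p; eauto].
  intros p q Hp Hpq. split.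
  - eapply Mod_p_antitone; eauto; lra.
  - eapply normalized_Mod_p_mono; eauto; lra.
Qed.
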